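(* Let $(X_1,Y_1),\dots,(X_{n+m},Y_{n+m})$ be exchangeable with $Y_i\in\mathbb{R}$, $s:\mathcal{X}\to[0,1]$ a fixed score, $c\in\mathbb{R}$, and binary risk $L_i=\mathbf{1}\{Y_i\le c\}$. For $\gamma>0$ let $E'_{\gamma,n+j}=E_{\gamma,n+j}(1)$, $j=1,\dots,m$, and let $\mathcal{S}'$ be the output of the e-BH procedure at level $\alpha\in(0,1)$ applied to $\{E'_{\gamma,n+j}\}_{j=1}^m$. Then (i) $\mathcal{S}'$ satisfies $\mathbb{E}\big[\sum_{j\in\mathcal{S}'}L_{n+j}/(1\vee|\mathcal{S}'|)\big]\le\alpha$; (ii) if $\gamma=\alpha$, then $\mathcal{S}'=\mathcal{S}^{\mathrm{CS}}$.
   Context: Let $\mathcal{M}=\{s(X_i)\}_{i=1}^{n+m}$; $\mathrm{FR}_{n+j}(t;\ell)=\frac{\ell\mathbf{1}\{s(X_{n+j})\le t\}+\sum_{i=1}^nL_i\mathbf{1}\{s(X_i)\le t\}}{1+\sum_{k\ne j}\mathbf{1}\{s(X_{n+k})\le t\}}\cdot\frac{m}{n+1}$; $t_{\gamma,n+j}(\ell)=\max\{t\in\mathcal{M}:\mathrm{FR}_{n+j}(t;\ell)\le\gamma\}$ ($\max\emptyset=-\infty$); $E_{\gamma,n+j}(\ell)=\frac{(n+1)\mathbf{1}\{s(X_{n+j})\le t_{\gamma,n+j}(\ell)\}}{\ell\mathbf{1}\{s(X_{n+j})\le t_{\gamma,n+j}(\ell)\}+\sum_{i=1}^nL_i\mathbf{1}\{s(X_i)\le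 t_{\gamma,n+j}(\ell)\}}$ (ratio $0$ if numerator $0$, $+\infty$ if numerator positive and denominator $0$). The e-BH procedure at level $\alpha$ on $E_1,\dots,E_m$: $\hat\tau=\max\{\tau\in\{1,\dots,m\}:\sum_j\mathbf{1}\{E_j\ge m/(\alpha\tau)\}\ge\tau\}$ ($0$ if empty), selecting $\{j:E_j\ge m/(\alpha\hat\tau)\}$ (empty if $\hat\tau=0$). $\mathcal{S}^{\mathrm{CS}}$ is the Benjamini–Hochberg output at level $\alpha$ on the conformal p-values $p_j=\frac{1+\sum_{i=1}^n\mathbf{1}\{V(X_i,Y_i)\le V(X_{n+j},c)\}}{n+1}$, $V(x,y)=\infty\cdot\mathbf{1}\{y>c\}+s(x)$ (with $\infty\cdot0=0$). *)

From HB Require Import structures.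
From mathcomp Require Import all_boot all_order all_algebra fingroup perm.
From mathcomp Require Import all_classical all_reals all_analysis.
Set Implicit Arguments. Unset Strict Implicit. Unset Printing Implicit Defensive.
Import Order.TTheory GRing.Theory Num.Theory.
Local Open Scope ring_scope.

Section Defs.
Variable R : realType.

Definition ind (b : bool) : R := b%:R.

Definition Lrisk (c y : R) : R := ind (y <= c).

(* 1{x <= t} for an extended-real threshold t (t = -oo means max of empty set) *)
Definition ileE (x : R) (t : \bar R) : R := ind (x%:E <= t)%E.

Variables (n m : nat).
(* Indices: calibration i : 'I_n is  lshift m i  (= i in 1..n),
   test j : 'I_m is  rshift n j  (= n+j). *)

Definition FR (S Y : 'I_(n + m) -> R) (c : R) (j : 'I_m) (t l : R) : R :=
  (l * ind (S (rshift n j) <= t)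
     + \sum_(i < n) Lrisk c (Y (lshift m i)) * ind (S (lshift m i) <= t))
  / (1 + \sum_(k < m | k != j) ind (S (rshift n k) <= t))
  * (m%:R / (n.+1)%:R).

Definition thr (S Y : 'I_(n + m) -> R) (c gamma : R) (j : 'I_m) (l : R)
  : \bar R :=
  \big[Order.max/-oo%E]_(i < n + m | FR S Y c j (S i) l <= gamma) (S i)%:E.

Definition Evalue (S Y : 'I_(n + m) -> R) (c gamma : R) (j : 'I_m) (l : R)
  : \bar R :=
  let t := thr S Y c gamma j l in
  let num := (n.+1)%:R * ileE (S (rshift n j)) t in
  let den := l * ileE (S (rshift n j)) t
     + \sum_(i < n) Lrisk c (Y (lshift m i)) * ileE (S (lshift m i)) t in
  if num == 0 then 0%E else if den == 0 then +oo%E else (num / den)%:E.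

End Defs.
Arguments ind {R}.

Section Procedures.
Variable R : realType.
Variable m : nat.

Definition ebh_tau (alpha : R) (E : 'I_m -> \bar R) : nat :=
  \max_(tau < m.+1 | (0 < tau)%N &&
      (tau <= #|[set j | ((m%:R / (alpha * tau%:R))%:E <= E j)%E]|)%N) tau.

Definition ebh_sel (alpha : R) (E : 'I_m -> \bar R) : {set 'I_m} :=
  let tau := ebh_tau alpha E in
  if tau == 0%N then finset.set0
  else [set j | ((m%:R / (alpha * tau%:R))%:E <= E j)%E].

Definition bh_k (alpha : R) (p : 'I_m -> R) : nat :=
  \max_(k < m.+1 | (0 < k)%N &&
      (k <= #|[set j | (p j <= alpha * k%:R / m%:R)%R]|)%N) k.

Definition bh_sel (alpha : R) (p : 'I_m -> R) : {set 'I_m} :=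
  let k := bh_k alpha p in
  if k == 0%N then finset.set0 else [set j | p j <= alpha * k%:R / m%:R].

Definition fdp (L : 'I_m -> R) (Sel : {set 'I_m}) : R :=
  (\sum_(j in Sel) L j) / Num.max 1 (#|Sel|%:R).

End Procedures.

(* nonconformity score V(x,y) = oo * 1{y > c} + s(x)  (oo * 0 = 0) *)
Definition Vscore (R : realType) (T : Type) (s : T -> R) (c : R) (x : T) (y : R)
  : \bar R := if c < y then +oo%E else (s x)%:E.

Definition pconf (R : realType) (T : Type) (n m : nat) (s : T -> R) (c : R)
  (Xs : 'I_(n + m) -> T) (Ys : 'I_(n + m) -> R) (j : 'I_m) : R :=
  (1 + \sum_(i < n) ind ((Vscore s c (Xs (lshift m i)) (Ys (lshift m i))
                          <= Vscore s c (Xs (rshift n j)) c)%E))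
  / (n.+1)%:R.

(* Stated on measurable rectangles prod_i (A_i x B_i), which form a pi-system
   generating the product sigma-algebra, hence equivalently on all events. *)
Definition exchangeable (R : realType) d (Omega : measurableType d)
  (P : probability Omega R) dX (X : measurableType dX) (N : nat)
  (Xd : 'I_N -> Omega -> X) (Yd : 'I_N -> Omega -> R) : Prop :=
  forall (sigma : {perm 'I_N}) (A : 'I_N -> set X) (B : 'I_N -> set R),
    (forall i, measurable (A i)) -> (forall i, measurable (B i)) ->
    P [set w | forall i, A i (Xd (sigma i) w) /\ B i (Yd (sigma i) w)]%classic
    = P [set w | forall i, A i (Xd i w) /\ B i (Yd i w)]%classic.

From HB Require Import structures.
From mathcomp Require Import all_boot all_order all_algebra fingroup perm.
From mathcomp Require Import all_classical all_reals all_analysis.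
From mathcomp Require Import measurable_realfun lebesgue_integral_nonneg ring.

Set Implicit Arguments. Unset Strict Implicit. Unset Printing Implicit Defensive.
Import Order.TTheory GRing.Theory Num.Theory.
Import numFieldNormedType.Exports.
Local Open Scope ring_scope.

(* Part (i).  e-BH at level alpha selects a set of size at least tau all of
   whose e-values are at least m / (alpha tau), so its false discovery
   proportion is at most (alpha / m) sum_j L_{n+j} E_{n+j}.  The product
   L_{n+j} E_{n+j} vanishes unless L_{n+j} = 1, and then FR_{n+j}(t; 1) =
   FR_{n+j}(t; L_{n+j}); hence L_{n+j} E_{n+j} = (n + 1) q_{n+j}, where q
   normalises the weights L_a 1{s(X_a) <= t} over the calibration points and
   n+j, t being the threshold built from FR(.; L_{n+j}).  That threshold is a
   symmetric function of the calibration points and n+j, so by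
   exchangeability E q_{n+j} = E q_i for every calibration point i; as the
   n + 1 weights sum to at most 1, E [L_{n+j} E_{n+j}] <= 1 and the expected
   proportion is at most alpha.

   Part (ii).  When gamma = alpha, every test point lying below some
   admissible score (one at which the estimated FDR is at most alpha) has as
   threshold the largest admissible score T.  So the e-values equal the
   constant (n + 1) / (1 + N(T)) on R = {j : s(X_{n+j}) <= T} and vanish
   elsewhere, and the inequality defining T says that both e-BH and BH on the
   conformal p-values (1 + N(s(X_{n+j}))) / (n + 1) reject exactly R. *)

(** * Oracle weights *)

Lemma ind_ge0 (R : realType) (b : bool) : 0 <= ind b :> R.
Proof. by case: b. Qed.

Lemma Lrisk_ge0 (R : realType) (c y : R) : 0 <= Lrisk c y.
Proof. exact: ind_ge0. Qed.

Lemma ileE_bigmax (R : realType) k (x : R) (P : pred 'I_k) (F : 'I_k -> R) :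
  ileE x (\big[Order.max/-oo%E]_(r | P r) (F r)%:E) =
  ind [exists r, P r && (x <= F r)].
Proof.
rewrite /ileE; congr ind; apply/bigmax_geP/existsP.
  case=> [|[r Pr]]; first by rewrite leNgt ltNye.
  by rewrite lee_fin => le; exists r; rewrite Pr.
by move=> [r /andP[Pr le]]; right; exists r => //; rewrite lee_fin.
Qed.

Section oracle_weight.
Variables (R : realType) (n m : nat) (gamma : R) (j : 'I_m).
Implicit Types (S L : 'I_(n + m) -> R) (t : R).

Definition calib_or_test (a : 'I_(n + m)) : bool := (a < n)%N || (a == rshift n j).

Lemma rshift_calib_or_test k : calib_or_test (rshift n k) = (k == j).
Proof. by rewrite /calib_or_test /= ltnNge leq_addr (inj_eq (@rshift_inj _ _)). Qed.

Lemma big_calib_or_test (F : 'I_(n + m) -> R) :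
  \sum_(a | calib_or_test a) F a = F (rshift n j) + \sum_(i < n) F (lshift m i).
Proof.
rewrite big_split_ord [RHS]addrC; congr (_ + _).
  by apply: eq_bigl => i; rewrite /calib_or_test /= ltn_ord.
rewrite (eq_bigl (fun k => k == j)) ?big_pred1_eq // => k.
exact: rshift_calib_or_test.
Qed.

(* [fdr_hat j S L t] is FR_{n+j}(t; L_{n+j}); the oracle weights normalise
   L_a 1{S_a <= t} over the calibration points and n+j at the threshold
   defined by [fdr_hat]. *)
Definition fdr_hat S L t : R :=
  (\sum_(a | calib_or_test a) L a * ind (S a <= t))
  / (1 + \sum_(k < m | k != j) ind (S (rshift n k) <= t)) * (m%:R / n.+1%:R).

Definition below_thr S L a : R :=
  ind [exists r, (fdr_hat S L (S r) <= gamma) && (S a <= S r)].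

Definition thr_mass S L : R := \sum_(a | calib_or_test a) L a * below_thr S L a.

Definition oracle_weight S L a : R := L a * below_thr S L a / thr_mass S L.

Lemma sum_oracle_weight_le1 S L : \sum_(a | calib_or_test a) oracle_weight S L a <= 1.
Proof.
rewrite -big_distrl /= -/(thr_mass S L).
by have [->|?] := eqVneq (thr_mass S L) 0; rewrite ?invr0 ?mulr0 ?mulfV.
Qed.

Lemma oracle_weight_ge0 S L a : (forall b, 0 <= L b) -> 0 <= oracle_weight S L a.
Proof.
move=> L_ge0; rewrite /oracle_weight /thr_mass.
by rewrite !mulr_ge0 ?ind_ge0 ?invr_ge0 ?sumr_ge0 // => b _; rewrite mulr_ge0 ?ind_ge0.
Qed.

Section transposition.
Variable i : 'I_n.
Let tau := tperm (lshift m i) (rshift n j).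

Lemma calib_or_test_tperm a : calib_or_test (tau a) = calib_or_test a.
Proof.
by rewrite /tau; case: tpermP => // ->; rewrite /calib_or_test /= ltn_ord ?eqxx orbT.
Qed.

Lemma big_calib_or_test_tperm (F : 'I_(n + m) -> R) :
  \sum_(a | calib_or_test a) F (tau a) = \sum_(a | calib_or_test a) F a.
Proof.
rewrite [RHS](reindex_inj (@perm_inj _ tau)) /=.
by apply: eq_bigl => a; rewrite calib_or_test_tperm.
Qed.

Lemma tperm_rshift k : k != j -> tau (rshift n k) = rshift n k.
Proof. by move=> kj; rewrite /tau tpermD // ?eq_lrshift // eq_shift eq_sym. Qed.

Lemma fdr_hat_tperm S L t : fdr_hat (S \o tau) (L \o tau) t = fdr_hat S L t.
Proof.
rewrite /fdr_hat /= (big_calib_or_test_tperm (fun a => L a * ind (S a <= t))).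
by congr (_ / (1 + _) * _); apply: eq_bigr => k kj; rewrite tperm_rshift.
Qed.

Lemma below_thr_tperm S L a :
  below_thr (S \o tau) (L \o tau) a = below_thr S L (tau a).
Proof.
rewrite /below_thr; congr ind; apply/existsP/existsP => -[r].
  by rewrite fdr_hat_tperm; exists (tau r).
by exists (tau r); rewrite fdr_hat_tperm /= tpermK.
Qed.

Lemma oracle_weight_tperm S L :
  oracle_weight (S \o tau) (L \o tau) (rshift n j) = oracle_weight S L (lshift m i).
Proof.
have mass : thr_mass (S \o tau) (L \o tau) = thr_mass S L.
  rewrite /thr_mass; under eq_bigr do rewrite below_thr_tperm.
  exact: (big_calib_or_test_tperm (fun a => L a * below_thr S L a)).
by rewrite /oracle_weight mass below_thr_tperm /= /tau tpermR.
Qed.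
End transposition.
End oracle_weight.

Section Evalue_oracle_weight.
Variables (R : realType) (n m : nat) (c gamma : R) (S Y : 'I_(n + m) -> R).
Variable j : 'I_m.
Let L a := Lrisk c (Y a).
Let t_j := thr S Y c gamma j 1.

Lemma FR_fdr_hat t : L (rshift n j) = 1 -> FR S Y c j t 1 = fdr_hat j S L t.
Proof.
by move=> L1; rewrite /FR /fdr_hat big_calib_or_test -/(L _) L1.
Qed.

Lemma ileE_thr a : L (rshift n j) = 1 -> ileE (S a) t_j = below_thr gamma j S L a.
Proof.
move=> L1; rewrite /t_j /thr ileE_bigmax; congr ind; apply: eq_existsb => r.
by rewrite FR_fdr_hat.
Qed.

Definition evalue1 : R :=
  n.+1%:R * ileE (S (rshift n j)) t_j /
  (ileE (S (rshift n j)) t_j + \sum_(i < n) L (lshift m i) * ileE (S (lshift m i)) t_j).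

Lemma Evalue1E : Evalue S Y c gamma j 1 = evalue1%:E.
Proof.
rewrite /Evalue /evalue1 /= mul1r -/t_j; set rest := \sum_(i < n) _.
have rest_ge0 : 0 <= rest.
  by rewrite sumr_ge0 // => i _; rewrite mulr_ge0 ?Lrisk_ge0 ?ind_ge0.
rewrite /ileE /ind; case: (_ <= t_j)%E => /=; last by rewrite mulr0 eqxx mul0r.
by rewrite mulr1 pnatr_eq0 /= gt_eqF // ltr_pwDl.
Qed.

Lemma evalue1_ge0 : 0 <= evalue1.
Proof.
by rewrite divr_ge0 ?mulr_ge0 ?ind_ge0 ?addr_ge0 ?sumr_ge0 // => i _;
  rewrite mulr_ge0 ?Lrisk_ge0 ?ind_ge0.
Qed.

Lemma Lrisk_mul_evalue1 :
  L (rshift n j) * evalue1 = n.+1%:R * oracle_weight gamma j S L (rshift n j).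
Proof.
have [L1|] := eqVneq (L (rshift n j)) 1; last first.
  rewrite /oracle_weight /L /Lrisk /ind.
  by case: (_ <= c) => [/eqP|_] /=; rewrite ?mul0r ?mulr0.
have mass : thr_mass gamma j S L =
    ileE (S (rshift n j)) t_j + \sum_(i < n) L (lshift m i) * ileE (S (lshift m i)) t_j.
  rewrite /thr_mass big_calib_or_test L1 mul1r ileE_thr //.
  by congr (_ + _); apply: eq_bigr => i _; rewrite ileE_thr.
by rewrite L1 mul1r /evalue1 /oracle_weight mass ileE_thr // L1 mul1r mulrA.
Qed.
End Evalue_oracle_weight.

(** * The false discovery proportion of e-BH *)

Section fdp_ebh.
Variables (R : realType) (m : nat) (alpha : R).
Hypothesis alpha_gt0 : 0 < alpha.

Lemma ebh_tau_spec (E : 'I_m -> \bar R) : let tau := ebh_tau alpha E in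
  tau = 0%N \/
  (0 < tau)%N && (tau <= #|[set j | ((m%:R / (alpha * tau%:R))%:E <= E j)%E]|)%N.
Proof.
rewrite /ebh_tau; elim/big_rec: _ => [|t x Pt IH]; first by left.
by case: (leqP t x) => _; [|right].
Qed.

Lemma fdp_ebh_le (L e : 'I_m -> R) : (forall j, 0 <= L j) -> (forall j, 0 <= e j) ->
  fdp L (ebh_sel alpha (fun j => (e j)%:E)) <= alpha / m%:R * \sum_j L j * e j.
Proof.
move=> L_ge0 e_ge0; have Le_ge0 j : 0 <= L j * e j by rewrite mulr_ge0.
rewrite /ebh_sel; case: eqP => [_|tau_neq0].
  by rewrite /fdp big_set0 mul0r mulr_ge0 ?sumr_ge0 // divr_ge0 // ltW.
have [//|/andP[tau_gt0 tau_le]] := ebh_tau_spec (fun j => (e j)%:E).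
set tau := ebh_tau _ _ in tau_gt0 tau_le *; set Sel := [set j | _] in tau_le *.
have m_gt0 : (0 < m)%N.
  rewrite (leq_trans tau_gt0) // (leq_trans tau_le) //.
  by rewrite (leq_trans (max_card _)) ?card_ord.
have [mR tauR] : 0 < m%:R :> R /\ 0 < tau%:R :> R by rewrite !ltr0n.
have Sel_gt0 : 0 < #|Sel|%:R :> R by rewrite ltr0n (leq_trans tau_gt0).
have L_le j : j \in Sel -> L j <= alpha * tau%:R / m%:R * (L j * e j).
  rewrite inE lee_fin ler_pdivrMr ?mulr_gt0 // => e_ge.
  rewrite mulrCA -[leLHS]mulr1 ler_wpM2l //.
  by rewrite mulrAC ler_pdivlMr // mul1r mulrC.
rewrite /fdp max_r ?ler1n ?(leq_trans tau_gt0) // ler_pdivrMr //.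
apply: (le_trans (ler_sum _ L_le)); rewrite -mulr_sumr.
have sum_le : \sum_(j in Sel) L j * e j <= \sum_j L j * e j.
  by rewrite [leRHS](bigID (mem Sel)) /= lerDl sumr_ge0.
have alpha_m_ge0 : 0 <= alpha / m%:R by rewrite divr_ge0 // ltW.
rewrite [leLHS](_ : _ = alpha / m%:R * (tau%:R * \sum_(j in Sel) L j * e j));
  last by ring.
by rewrite -[leRHS]mulrA ler_wpM2l // mulrC ler_pM ?sumr_ge0 ?ler_nat.
Qed.

End fdp_ebh.

Lemma fdp_ebh_Evalue1_le (R : realType) (n m : nat) (c gamma alpha : R)
    (S Y : 'I_(n + m) -> R) : 0 < alpha ->
  fdp (fun j => Lrisk c (Y (rshift n j)))
      (ebh_sel alpha (fun j => Evalue S Y c gamma j 1)) <=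
  alpha / m%:R *
    \sum_j n.+1%:R * oracle_weight gamma j S (fun a => Lrisk c (Y a)) (rshift n j).
Proof.
move=> alpha_gt0.
have -> : (fun j => Evalue S Y c gamma j 1) = fun j => (evalue1 c gamma S Y j)%:E.
  by apply/funext => j; exact: Evalue1E.
apply: le_trans (fdp_ebh_le alpha_gt0 _ _) _ => [j|j|].
- exact: Lrisk_ge0.
- exact: evalue1_ge0.
by under eq_bigr do rewrite Lrisk_mul_evalue1.
Qed.

(** * Selection at gamma = alpha *)

Lemma sum_ind_card (R : realType) (I : finType) (P : pred I) :
  \sum_(k : I) (ind (P k) : R) = #|[set k | P k]|%:R.
Proof.
rewrite /ind -natr_sum; congr _%:R.
rewrite -sum1_card [RHS]big_mkcond /=.
by apply: eq_bigr => k _; rewrite inE; case: (P k).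
Qed.

Lemma bigmax_ord_eq k (P : pred 'I_k) (r : nat) :
  (forall t, P t -> t <= r)%N -> (r = 0%N \/ exists2 t, P t & val t = r) ->
  (\max_(t < k | P t) t)%N = r.
Proof.
move=> le_r r_max; apply/eqP; rewrite eqn_leq; apply/andP; split.
  by apply/bigmax_leqP => t; exact: le_r.
by case: r_max => [->|[t Pt <-]] //; exact: (leq_bigmax_cond t Pt).
Qed.

Section conformal_selection.
Variables (R : realType) (T : Type) (s : T -> R) (c alpha : R) (n m : nat).
Variables (X : 'I_(n + m) -> T) (Y : 'I_(n + m) -> R).
Hypothesis alpha_gt0 : 0 < alpha.

Let S a := s (X a).
Let L a := Lrisk c (Y a).

Definition calib_count t := \sum_(i < n) L (lshift m i) * ind (S (lshift m i) <= t).

Definition test_count t : R := \sum_(k < m) ind (S (rshift n k) <= t).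

(* [fdr_bound t k]: m (1 + N(t)) / ((n + 1) k) <= alpha, cleared of
   denominators. *)
Definition fdr_bound t (k : R) := m%:R * (1 + calib_count t) <= alpha * n.+1%:R * k.

Definition admissible t := (0 < test_count t) && fdr_bound t (test_count t).

Definition under_admissible x := [exists r, admissible (S r) && (x <= S r)].

Definition rejected := [set j : 'I_m | under_admissible (S (rshift n j))].

Definition e_rejected : R :=
  n.+1%:R / (1 + \sum_(i < n) L (lshift m i) * ind (under_admissible (S (lshift m i)))).

Lemma calib_count_ge0 t : 0 <= calib_count t.
Proof. by rewrite sumr_ge0 // => i _; rewrite mulr_ge0 ?Lrisk_ge0 ?ind_ge0. Qed.

Lemma calib_count_le t1 t2 : t1 <= t2 -> calib_count t1 <= calib_count t2.
Proof.
move=> le12; apply: ler_sum => i _; rewrite ler_wpM2l ?Lrisk_ge0 // /ind.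
by case: (boolP (S _ <= t1)) => // le1; rewrite (le_trans le1 le12).
Qed.

Lemma test_count_card t : test_count t = #|[set k | S (rshift n k) <= t]|%:R.
Proof. exact: sum_ind_card. Qed.

Lemma fdr_bound_le t1 t2 k1 k2 : t1 <= t2 -> k2 <= k1 -> fdr_bound t2 k2 -> fdr_bound t1 k1.
Proof.
move=> le_t le_k bound2; apply: le_trans (le_trans _ bound2) _.
  by rewrite ler_wpM2l ?lerD2l ?calib_count_le.
by rewrite ler_wpM2l // mulr_ge0 // ltW.
Qed.

Lemma FR_le_alpha j t : S (rshift n j) <= t ->
  (FR S Y c j t 1 <= alpha) = admissible t.
Proof.
move=> le_jt.
have K_eq : test_count t = 1 + \sum_(k < m | k != j) ind (S (rshift n k) <= t).
  by rewrite /test_count (bigD1 j) //= /ind le_jt.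
have K_gt0 : 0 < test_count t.
  by rewrite K_eq ltr_pwDl // sumr_ge0 // => k _; exact: ind_ge0.
rewrite /FR /admissible /fdr_bound K_gt0 -K_eq /ind le_jt mul1r -/(calib_count t).
rewrite mulf_div ler_pdivrMr ?mulr_gt0 //.
by rewrite /= mulr1n; congr (_ <= _); ring.
Qed.

Lemma ileE_thr_alpha j x : j \in rejected ->
  ileE x (thr S Y c alpha j 1) = ind (under_admissible x).
Proof.
rewrite inE => /existsP[r0 /andP[adm0 le0]].
rewrite /thr ileE_bigmax; congr ind; apply/existsP/existsP => -[r /andP[r_ok le_r]].
  have [le|lt] := leP (S (rshift n j)) (S r).
    by exists r; rewrite -(FR_le_alpha le) r_ok le_r.
  by exists r0; rewrite adm0 (le_trans le_r (le_trans (ltW lt) le0)).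
have [le|lt] := leP (S (rshift n j)) (S r).
  by exists r; rewrite FR_le_alpha // r_ok le_r.
by exists r0; rewrite FR_le_alpha // adm0 (le_trans le_r (le_trans (ltW lt) le0)).
Qed.

Lemma ileE_thr_alpha_test j : j \notin rejected ->
  ileE (S (rshift n j)) (thr S Y c alpha j 1) = 0.
Proof.
rewrite inE => /negP not_adm; rewrite /thr ileE_bigmax /ind.
case: existsP => // -[r /andP[FR_le le_r]]; case: not_adm.
by apply/existsP; exists r; rewrite -(FR_le_alpha le_r) FR_le le_r.
Qed.

Lemma Evalue_alpha j :
  Evalue S Y c alpha j 1 = if j \in rejected then e_rejected%:E else 0%E.
Proof.
case: ifPn => [j_rej|j_nrej]; last by rewrite /Evalue /= ileE_thr_alpha_test // mulr0 eqxx.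
rewrite /Evalue /= !ileE_thr_alpha //.
under eq_bigr do rewrite ileE_thr_alpha //.
have := j_rej; rewrite inE => ->; rewrite /ind mulr1 pnatr_eq0 /= mul1r.
by rewrite gt_eqF // ltr_pwDl // sumr_ge0 // => i _; rewrite mulr_ge0 ?Lrisk_ge0 ?ind_ge0.
Qed.

Lemma rejected_max j : j \in rejected ->
  exists r, admissible (S r) /\ forall x, under_admissible x = (x <= S r).
Proof.
rewrite inE => /existsP[r0 /andP[adm0 _]].
have [r adm_r r_max] := @arg_maxP _ _ _ r0 (fun r => admissible (S r)) S adm0.
exists r; split => // x; apply/existsP/idP => [[r' /andP[adm' le']]|le].
  exact: le_trans le' (r_max r' adm').
by exists r; rewrite adm_r le.
Qed.

Lemma card_rejected r : (forall x, under_admissible x = (x <= S r)) ->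
  #|rejected|%:R = test_count (S r).
Proof.
move=> adm_le; rewrite test_count_card; congr _%:R.
by apply: eq_card => k; rewrite !inE adm_le.
Qed.

Lemma e_rejectedE r : (forall x, under_admissible x = (x <= S r)) ->
  e_rejected = n.+1%:R / (1 + calib_count (S r)).
Proof. by move=> adm_le; rewrite /e_rejected; under eq_bigr do rewrite adm_le. Qed.

Lemma ebh_level_le t k : 0 < k ->
  (m%:R / (alpha * k) <= n.+1%:R / (1 + calib_count t)) = fdr_bound t k.
Proof.
move=> k_gt0; have N_gt0 : 0 < 1 + calib_count t by rewrite ltr_pwDl ?calib_count_ge0.
rewrite ler_pdivrMr ?mulr_gt0 // mulrAC ler_pdivlMr // /fdr_bound.
by congr (_ <= _); ring.
Qed.

Lemma pconf_alpha j : pconf s c X Y j = (1 + calib_count (S (rshift n j))) / n.+1%:R.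
Proof.
rewrite /pconf /calib_count; congr ((1 + _) / _); apply: eq_bigr => i _.
rewrite /Vscore ltxx /L /Lrisk /S; case: (ltP c (Y (lshift m i))) => Yc.
  by rewrite /ind mul0r.
by rewrite lee_fin /ind mul1r.
Qed.

Lemma pconf_le_bh j k : (0 < m)%N ->
  (pconf s c X Y j <= alpha * k / m%:R) = fdr_bound (S (rshift n j)) k.
Proof.
move=> m_gt0; rewrite pconf_alpha ler_pdivrMr // mulrAC ler_pdivlMr ?ltr0n //.
by rewrite /fdr_bound; congr (_ <= _); ring.
Qed.

Lemma e_rejected_ge j : j \in rejected -> m%:R / (alpha * #|rejected|%:R) <= e_rejected.
Proof.
move=> /rejected_max[r [/andP[K_gt0 bound] adm_le]].
by rewrite (card_rejected adm_le) (e_rejectedE adm_le) ebh_level_le.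
Qed.

Lemma pconf_rejected j : j \in rejected ->
  pconf s c X Y j <= alpha * #|rejected|%:R / m%:R.
Proof.
move=> j_rej; have m_gt0 : (0 < m)%N by case: m j {j_rej} => [[]|].
have /rejected_max[r [/andP[_ bound] adm_le]] := j_rej.
rewrite pconf_le_bh // (card_rejected adm_le).
by apply: fdr_bound_le bound => //; move: j_rej; rewrite inE adm_le.
Qed.

Definition bh_set k := [set j | pconf s c X Y j <= alpha * k%:R / m%:R].

Lemma bh_set_sub_rejected k :
  (0 < k)%N -> (k <= #|bh_set k|)%N -> bh_set k \subset rejected.
Proof.
move=> k_gt0 k_le; have : (0 < #|bh_set k|)%N := leq_trans k_gt0 k_le.
rewrite card_gt0 => /set0Pn[j1 j1_in].
have [j0 j0_in j0_max] :=
  @arg_maxP _ _ _ j1 (fun j => j \in bh_set k) (fun j => S (rshift n j)) j1_in.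
have m_gt0 : (0 < m)%N by case: m j0 {j0_in j0_max j1_in} => [[]|].
set t := S (rshift n j0).
have k_le_K : k%:R <= test_count t.
  rewrite test_count_card ler_nat (leq_trans k_le) // subset_leq_card //.
  by apply/fintype.subsetP => j j_in; rewrite inE; exact: j0_max.
have adm_t : admissible t.
  rewrite /admissible (lt_le_trans _ k_le_K) ?ltr0n //=.
  by apply: fdr_bound_le k_le_K _; rewrite // /t -pconf_le_bh //; move: j0_in; rewrite inE.
apply/fintype.subsetP => j j_in; rewrite inE; apply/existsP; exists (rshift n j0).
by rewrite adm_t; exact: j0_max.
Qed.

Lemma rejected_sub_bh_set : rejected \subset bh_set #|rejected|.
Proof. by apply/fintype.subsetP => j j_rej; rewrite inE; exact: pconf_rejected. Qed.

Lemma ebh_level_mem tau j : (0 < tau)%N ->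
  ((m%:R / (alpha * tau%:R))%:E <= Evalue S Y c alpha j 1)%E =
  (j \in rejected) && (m%:R / (alpha * tau%:R) <= e_rejected).
Proof.
move=> tau_gt0; rewrite Evalue_alpha; case: ifP => _; first by rewrite lee_fin.
have m_gt0 : (0 < m)%N by case: m j => [[]|].
by rewrite (_ : 0%E = 0%:E) // lee_fin leNgt divr_gt0 ?mulr_gt0 ?ltr0n.
Qed.

Lemma ebh_level_card_mem j : (0 < #|rejected|)%N ->
  ((m%:R / (alpha * #|rejected|%:R))%:E <= Evalue S Y c alpha j 1)%E = (j \in rejected).
Proof.
move=> rej_gt0; rewrite ebh_level_mem //.
by case: (boolP (j \in rejected)) => //= j_rej; apply/idP; have := e_rejected_ge j_rej.
Qed.

Lemma card_rejected_ltS : (#|rejected| < m.+1)%N.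
Proof. by rewrite ltnS (leq_trans (max_card _)) ?card_ord. Qed.

Lemma ebh_tau_alpha : ebh_tau alpha (fun j => Evalue S Y c alpha j 1) = #|rejected|.
Proof.
rewrite /ebh_tau; apply: bigmax_ord_eq => [tau /andP[tau_gt0 tau_le]|].
  apply: leq_trans tau_le (subset_leq_card _); apply/fintype.subsetP => j.
  by rewrite inE ebh_level_mem // => /andP[].
have [->|rej_gt0] := posnP #|rejected|; [by left | right].
exists (Ordinal card_rejected_ltS) => //=; rewrite rej_gt0.
by apply/eq_leq/eq_card => j; rewrite inE ebh_level_card_mem.
Qed.

Lemma ebh_sel_alpha : ebh_sel alpha (fun j => Evalue S Y c alpha j 1) = rejected.
Proof.
rewrite /ebh_sel ebh_tau_alpha; case: eqP => [/eqP|/eqP rej_gt0].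
  by rewrite cards_eq0 => /eqP.
by apply/setP => j; rewrite inE ebh_level_card_mem // lt0n.
Qed.

Lemma bh_k_alpha : bh_k alpha (pconf s c X Y) = #|rejected|.
Proof.
rewrite /bh_k; apply: bigmax_ord_eq => [k /andP[k_gt0 k_le]|].
  exact: leq_trans k_le (subset_leq_card (bh_set_sub_rejected k_gt0 k_le)).
have [->|rej_gt0] := posnP #|rejected|; [by left | right].
exists (Ordinal card_rejected_ltS); rewrite //= rej_gt0.
exact: subset_leq_card rejected_sub_bh_set.
Qed.

Lemma bh_sel_alpha : bh_sel alpha (pconf s c X Y) = rejected.
Proof.
rewrite /bh_sel bh_k_alpha; case: eqP => [/eqP|/eqP rej_neq0].
  by rewrite cards_eq0 => /eqP.
apply/eqP; rewrite finset.eqEsubset rejected_sub_bh_set andbT.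
by apply: bh_set_sub_rejected; rewrite ?lt0n // subset_leq_card // rejected_sub_bh_set.
Qed.

Lemma ebh_sel_eq_bh_sel :
  ebh_sel alpha (fun j => Evalue S Y c alpha j 1) = bh_sel alpha (pconf s c X Y).
Proof. by rewrite ebh_sel_alpha bh_sel_alpha. Qed.

End conformal_selection.

(** * Measurability and exchangeability *)

Local Open Scope classical_set_scope.

Lemma measurable_inv (R : realType) : measurable_fun [set: R] (@GRing.inv R).
Proof.
move=> _ B mB; rewrite setTI.
have -> : GRing.inv @^-1` B =
    ([set~ 0] `&` GRing.inv @^-1` B) `|` ([set 0] `&` GRing.inv @^-1` B).
  by rewrite -setIUl setUCl setTI.
apply: measurableU.
  have open_neq0 : open [set~ (0 : R)].
    exact/closed_openC/accessible_closed_set1/hausdorff_accessible.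
  have : measurable_fun [set~ (0 : R)] GRing.inv.
    apply: open_continuous_measurable_fun => //.
    by apply/in_setP => x /eqP x0; exact: inv_continuous.
  by move=> /(_ (open_measurable open_neq0) B mB).
have [B0|B0] := pselect (B 0).
  rewrite (_ : _ `&` _ = [set 0]) //; apply/seteqP; split => x /=; first by case.
  by move=> ->; rewrite invr0.
by rewrite (_ : _ `&` _ = set0) //; apply/seteqP; split => x //= [-> ]; rewrite invr0.
Qed.

Section measurable_fun_real.
Context d (T : measurableType d) (R : realType).

Lemma measurable_funV (f : T -> R) : measurable_fun [set: T] f ->
  measurable_fun [set: T] (fun x => (f x)^-1).
Proof. by move=> mf; apply: measurableT_comp mf; exact: measurable_inv. Qed.

Lemma measurable_fun_ind (b : T -> bool) : measurable_fun [set: T] b ->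
  measurable_fun [set: T] (fun x => ind (b x) : R).
Proof.
move=> mb; rewrite (_ : (fun x => _) = fun x => if b x then 1 else 0).
  exact: measurable_fun_ifT.
by apply/funext => x; case: (b x).
Qed.

Lemma measurable_fun_existsb k (b : 'I_k -> T -> bool) :
  (forall r, measurable_fun [set: T] (b r)) ->
  measurable_fun [set: T] (fun x => [exists r, b r x]).
Proof.
move=> mb; apply: (measurable_fun_bool true) => //; rewrite setTI.
rewrite (_ : _ @^-1` _ = \bigcup_(r in [set: 'I_k]) (b r @^-1` [set true])).
  apply: fin_bigcup_measurable; first exact: finite_finset.
  by move=> r _; rewrite -[X in measurable X]setTI; exact: mb.
apply/seteqP; split => x /= => [/existsP[r br]|[r _ br]]; first by exists r.
by apply/existsP; exists r.
Qed.

Lemma measurable_fun_sum_cond (I : finType) (P : pred I) (h : I -> T -> R) :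
  (forall i, measurable_fun [set: T] (h i)) ->
  measurable_fun [set: T] (fun x => \sum_(i | P i) h i x).
Proof.
move=> mh; under eq_fun do rewrite big_mkcond /=.
by apply: measurable_sum => i; case: (P i) => //; exact: measurable_cst.
Qed.

End measurable_fun_real.

(* The scores and labels of N data points, with the sigma-algebra generated by
   measurable rectangles; exchangeability says that permuting the points
   preserves the probability of every rectangle. *)
Definition sample (R : realType) (N : nat) := {ffun 'I_N -> R * R}.
HB.instance Definition _ R N := Choice.on (sample R N).
HB.instance Definition _ (R : realType) N :=
  isPointed.Build (sample R N) [ffun=> (0, 0)].

Section sample_space.
Variables (R : realType) (N : nat).

Definition rectangle (A B : 'I_N -> set R) : set (sample R N) :=
  [set z | forall i, A i (z i).1 /\ B i (z i).2].

Definition rectangles : set (set (sample R N)) :=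
  [set rectangle A B | A in [set A | forall i, measurable (A i)] &
                       B in [set B | forall i, measurable (B i)]].

Definition sample_space := g_sigma_algebraType rectangles.

Lemma rectangles_setI_closed : setI_closed rectangles.
Proof.
move=> _ _ [A1 mA1 [B1 mB1 <-]] [A2 mA2 [B2 mB2 <-]].
exists (fun i => A1 i `&` A2 i) => [i|]; first exact: measurableI.
exists (fun i => B1 i `&` B2 i) => [i|]; first exact: measurableI.
rewrite /rectangle; apply/seteqP; split => z /=.
  by move=> h; split => i; have [[? ?] [? ?]] := h i.
by move=> [h1 h2] i; have [? ?] := h1 i; have [? ?] := h2 i.
Qed.

Lemma measurable_score i : measurable_fun [set: sample_space] (fun z => (z i).1).
Proof.
move=> _ B mB; rewrite setTI; apply: sub_sigma_algebra.
exists (fun k => if k == i then B else setT) => [k|]; first by case: eqP.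
exists (fun _ => setT) => //; apply/seteqP; split => z /=.
  by move=> /(_ i) []; rewrite eqxx.
by move=> Bz k; case: eqP => [->|].
Qed.

Lemma measurable_label i : measurable_fun [set: sample_space] (fun z => (z i).2).
Proof.
move=> _ B mB; rewrite setTI; apply: sub_sigma_algebra.
exists (fun _ => setT) => //.
exists (fun k => if k == i then B else setT) => [k|]; first by case: eqP.
apply/seteqP; split => z /=.
  by move=> /(_ i) []; rewrite eqxx.
by move=> Bz k; case: eqP => [->|].
Qed.

End sample_space.

Section exchangeable_sample.
Variables (R : realType) (N : nat).
Variables (d : measure_display) (Omega : measurableType d) (P : probability Omega R).
Variables (dX : measure_display) (X : measurableType dX).
Variables (Xd : 'I_N -> Omega -> X) (Yd : 'I_N -> Omega -> R) (s : X -> R).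
Hypothesis mXd : forall i, measurable_fun [set: Omega] (Xd i).
Hypothesis mYd : forall i, measurable_fun [set: Omega] (Yd i).
Hypothesis ms : measurable_fun [set: X] s.
Hypothesis exch : exchangeable P Xd Yd.

Definition permuted_sample (sigma : {perm 'I_N}) (w : Omega) : sample_space R N :=
  [ffun i => (s (Xd (sigma i) w), Yd (sigma i) w)].

Lemma permuted_sample_preimage sigma A B :
  permuted_sample sigma @^-1` rectangle A B =
  [set w | forall i, (s @^-1` A i) (Xd (sigma i) w) /\ B i (Yd (sigma i) w)].
Proof. by apply/seteqP; split => w /= h i; move: (h i); rewrite ffunE. Qed.

Lemma measurable_permuted_sample sigma :
  measurable_fun [set: Omega] (permuted_sample sigma).
Proof.

apply: (@measurability _ _ _ _ setT (permuted_sample sigma) (@rectangles R N)) => //.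
move=> _ [S [A mA [B mB <-]] <-]; rewrite setTI permuted_sample_preimage.
rewrite (_ : [set w | _] = \bigcap_(i in [set: 'I_N])
    ((s \o Xd (sigma i)) @^-1` A i `&` Yd (sigma i) @^-1` B i)).
  apply: fin_bigcap_measurable; first exact: finite_finset.
  move=> i _; apply: measurableI; rewrite -[X in measurable X]setTI.
    exact: (measurableT_comp ms (mXd _)).
  exact: mYd.
by apply/seteqP; split => w /= h i => [_|]; exact: h.
Qed.

Let law (sigma : {perm 'I_N}) : {measure set sample_space R N -> \bar R}.
Proof.
refine (pushforward P (permuted_sample sigma)).
exact: measurable_permuted_sample.
Defined.

(* The rectangles form a pi-system generating the sigma-algebra. *)
Lemma permuted_sample_law sigma A : measurable A ->
  P (permuted_sample sigma @^-1` A) = P (permuted_sample 1 @^-1` A).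
Proof.
move=> mA; apply: (@measure_unique _ R (sample_space R N) (@rectangles R N)
  (fun=> setT) erefl (@rectangles_setI_closed R N) _ _ (law sigma) (law 1)) => //.
- move=> _; exists (fun=> setT) => //; exists (fun=> setT) => //.
  by apply/seteqP; split.
- by apply/seteqP; split => // z _; exists 0%N.
- move=> _ [A' mA' [B mB <-]]; rewrite /= /pushforward !permuted_sample_preimage.
  have msA' i : measurable (s @^-1` A' i).
    by rewrite -[X in measurable X]setTI; exact: ms.
  rewrite (exch sigma msA' mB).
  by under [in RHS]eq_fun do under eq_forall do rewrite perm1.
- move=> _; rewrite /= /pushforward (le_lt_trans (probability_le1 _ _)) ?ltry //.
  by rewrite -[X in measurable X]setTI; exact: measurable_permuted_sample.
Qed.

Lemma exchangeable_integral sigma (g : sample_space R N -> \bar R) :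
  measurable_fun [set: sample_space R N] g -> (forall z, 0 <= g z)%E ->
  (\int[P]_w g (permuted_sample sigma w) = \int[P]_w g (permuted_sample 1 w))%E.
Proof.
move=> mg g0.
have law_integral tau : (\int[law tau]_z g z = \int[P]_w g (permuted_sample tau w))%E.
  by rewrite ge0_integral_pushforward ?preimage_setT //; exact: measurable_permuted_sample.
rewrite -(law_integral sigma) -(law_integral 1%g); apply: eq_measure_integral => A mA _.
exact: permuted_sample_law.
Qed.

End exchangeable_sample.

Section oracle_weight_measurable.
Variables (R : realType) (n m : nat) (c gamma : R) (j : 'I_m).
Local Notation Z := (sample_space R (n + m)).

Definition sample_scores (z : Z) a := (z a).1.
Definition sample_risks (z : Z) a := Lrisk c (z a).2.

Lemma measurable_sample_risks a : measurable_fun [set: Z] (sample_risks ^~ a).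
Proof.
apply: measurable_fun_ind; apply: measurable_fun_ler; first exact: measurable_label.
exact: measurable_cst.
Qed.

Lemma measurable_fdr_hat r : measurable_fun [set: Z]
  (fun z => fdr_hat j (sample_scores z) (sample_risks z) (sample_scores z r)).
Proof.
apply: measurable_funM; last exact: measurable_cst.
apply: measurable_funM.
  apply: measurable_fun_sum_cond => a; apply: measurable_funM.
    exact: measurable_sample_risks.
  by apply: measurable_fun_ind; apply: measurable_fun_ler; exact: measurable_score.
apply: measurable_funV; apply: measurable_funD; first exact: measurable_cst.
apply: measurable_fun_sum_cond => k.
by apply: measurable_fun_ind; apply: measurable_fun_ler; exact: measurable_score.
Qed.

Lemma measurable_below_thr a : measurable_fun [set: Z]
  (fun z => below_thr gamma j (sample_scores z) (sample_risks z) a).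
Proof.
apply: measurable_fun_ind; apply: measurable_fun_existsb => r.
apply: measurable_and; last by apply: measurable_fun_ler; exact: measurable_score.
by apply: measurable_fun_ler; [exact: measurable_fdr_hat|exact: measurable_cst].
Qed.

Lemma measurable_oracle_weight a : measurable_fun [set: Z]
  (fun z => oracle_weight gamma j (sample_scores z) (sample_risks z) a).
Proof.
have mLI b : measurable_fun [set: Z]
    (fun z => sample_risks z b * below_thr gamma j (sample_scores z) (sample_risks z) b).
  by apply: measurable_funM; [exact: measurable_sample_risks|exact: measurable_below_thr].
apply: measurable_funM; first exact: mLI.
by apply: measurable_funV; apply: measurable_fun_sum_cond.
Qed.

End oracle_weight_measurable.

(* No measurability is needed: the integral of a nonnegative function is the
   supremum of the integrals of the simple functions below it. *)
Lemma ge0_le_integralT d (T : measurableType d) (R : realType)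
    (mu : {measure set T -> \bar R}) (f1 f2 : T -> \bar R) :
  (forall x, 0 <= f1 x)%E -> (forall x, f1 x <= f2 x)%E ->
  (\int[mu]_x f1 x <= \int[mu]_x f2 x)%E.
Proof.
move=> f1_ge0 f12; have f2_ge0 x : (0 <= f2 x)%E := le_trans (f1_ge0 x) (f12 x).
rewrite !ge0_integralTE //; apply: ereal_sup_le => _ [h hf1 <-].
by exists h => //= x; exact: le_trans (hf1 x) (f12 x).
Qed.

Section expectation.
Variables (R : realType) (n m : nat) (c gamma : R).
Variables (d : measure_display) (Omega : measurableType d) (P : probability Omega R).
Variables (dX : measure_display) (X : measurableType dX).
Variables (Xd : 'I_(n + m) -> Omega -> X) (Yd : 'I_(n + m) -> Omega -> R) (s : X -> R).
Hypothesis mXd : forall i, measurable_fun [set: Omega] (Xd i).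
Hypothesis mYd : forall i, measurable_fun [set: Omega] (Yd i).
Hypothesis ms : measurable_fun [set: X] s.
Hypothesis exch : exchangeable P Xd Yd.

Let scores w a := s (Xd a w).
Let risks w a := Lrisk c (Yd a w).
Let weight j a w := oracle_weight gamma j (scores w) (risks w) a.
Let sample := permuted_sample Xd Yd s.

Lemma oracle_weight_permuted_sample j sigma a w :
  oracle_weight gamma j (sample_scores (sample sigma w)) (sample_risks c (sample sigma w)) a
  = oracle_weight gamma j (scores w \o sigma) (risks w \o sigma) a.
Proof.
by congr oracle_weight; apply/funext => b; rewrite /sample_scores /sample_risks ffunE.
Qed.

Lemma weightE j a w : weight j a w =
  oracle_weight gamma j (sample_scores (sample 1%g w)) (sample_risks c (sample 1%g w)) a.
Proof.
rewrite oracle_weight_permuted_sample.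
by congr oracle_weight; apply/funext => b; rewrite /= perm1.
Qed.

Lemma measurable_weight j a : measurable_fun [set: Omega] (weight j a).
Proof.
rewrite (_ : weight j a =
  (fun z => oracle_weight gamma j (sample_scores z) (sample_risks c z) a) \o sample 1%g).
  2: by apply/funext => w; exact: weightE.
exact: measurableT_comp (measurable_oracle_weight c gamma j a)
  (measurable_permuted_sample mXd mYd ms 1%g).
Qed.

Lemma measurable_weightE j a : measurable_fun [set: Omega] (fun w => (weight j a w)%:E).
Proof. exact/measurable_EFinP/measurable_weight. Qed.

Lemma weight_ge0 j a w : 0 <= weight j a w.
Proof. by apply: oracle_weight_ge0 => b; exact: Lrisk_ge0. Qed.

Lemma expectation_weight_calib j i :
  (\int[P]_w (weight j (lshift m i) w)%:E = \int[P]_w (weight j (rshift n j) w)%:E)%E.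
Proof.
pose tau := tperm (lshift m i) (rshift n j).
pose g z := (oracle_weight gamma j (sample_scores z) (sample_risks c z) (rshift n j))%:E.
transitivity (\int[P]_w g (sample tau w))%E.
  apply: eq_integral => w _; rewrite /g oracle_weight_permuted_sample.
  by rewrite oracle_weight_tperm.
rewrite (exchangeable_integral mXd mYd ms exch).
- by apply: eq_integral => w _; rewrite weightE.
- by apply/measurable_EFinP; exact: measurable_oracle_weight.
- by move=> z; rewrite /g lee_fin; apply: oracle_weight_ge0 => b; exact: Lrisk_ge0.
Qed.

Lemma expectation_weight_test_le j :
  (n.+1%:R%:E * \int[P]_w (weight j (rshift n j) w)%:E <= 1)%E.
Proof.
have mweight := measurable_weightE j.
have weight_ge0E a w : (0 <= (weight j a w)%:E)%E by rewrite lee_fin weight_ge0.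
have sum_le1 : (\int[P]_w (\sum_(a | calib_or_test j a) weight j a w)%:E <= 1)%E.
  apply: le_trans (_ : \int[P]_w (cst 1%E w) <= 1)%E.
    apply: ge0_le_integral => // [w _||w _].
    - by rewrite lee_fin sumr_ge0 // => a _; exact: weight_ge0.
    - apply/measurable_EFinP; apply: measurable_fun_sum_cond => a.
      exact: measurable_weight.
    - by rewrite lee_fin; exact: sum_oracle_weight_le1.
  by rewrite integral_cst // mul1e probability_le1.
move: sum_le1; under eq_integral do rewrite big_calib_or_test EFinD -sumEFin.
rewrite ge0_integralD //; last 2 first.
- by move=> w _; rewrite sume_ge0.
- exact: emeasurable_sum.
rewrite ge0_integral_sum // (eq_bigr _ (fun i _ => expectation_weight_calib j i)).
by rewrite sumr_const card_ord mule_natl muleS.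
Qed.

Lemma expectation_fdp_ebh_le alpha : 0 < alpha ->
  (\int[P]_w (fdp (fun j => Lrisk c (Yd (rshift n j) w))
     (ebh_sel alpha (fun j => Evalue (scores w) (Yd ^~ w) c gamma j 1)))%:E
   <= alpha%:E)%E.
Proof.
move=> alpha_gt0; set k := alpha / m%:R * n.+1%:R.
have k_ge0 : 0 <= k by rewrite mulr_ge0 // divr_ge0 // ltW.
apply: (@le_trans _ _ (\int[P]_w (\sum_j (k * weight j (rshift n j) w)%:E))%E).
  apply: ge0_le_integralT => w.
    by rewrite lee_fin divr_ge0 ?sumr_ge0 ?le_max ?ler01 // => j _; exact: Lrisk_ge0.
  rewrite sumEFin lee_fin -mulr_sumr -mulrA mulr_sumr.
  exact: fdp_ebh_Evalue1_le.
rewrite ge0_integral_sum //; last 2 first.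
- by move=> j; apply/measurable_EFinP/measurable_funM => //; exact: measurable_weight.
- by move=> j w _; rewrite lee_fin mulr_ge0 ?weight_ge0.
apply: (@le_trans _ _ (\sum_(j < m) (alpha / m%:R)%:E)%E).
  apply: lee_sum => j _; under eq_integral do rewrite EFinM.
  rewrite ge0_integralZl_EFin //; first last.
  - exact: measurable_weightE.
  - by move=> w _; rewrite lee_fin weight_ge0.
  rewrite /k EFinM -muleA -[leRHS]mule1 lee_wpmul2l ?expectation_weight_test_le //.
  by rewrite lee_fin divr_ge0 // ltW.
rewrite sumEFin lee_fin sumr_const card_ord.
have [->|m_gt0] := posnP m; first exact: ltW.
by rewrite -[_ *+ m]mulr_natr divfK // pnatr_eq0 -lt0n.
Qed.

End expectation.

Theorem corollary5p1 (R : realType) (d : measure_display)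
  (Omega : measurableType d) (P : probability Omega R)
  (dX : measure_display) (X : measurableType dX) (n m : nat)
  (Xd : 'I_(n + m) -> Omega -> X) (Yd : 'I_(n + m) -> Omega -> R)
  (s : X -> R) (c gamma alpha : R) :
  (forall i, measurable_fun setT (Xd i)) ->
  (forall i, measurable_fun setT (Yd i)) ->
  exchangeable P Xd Yd ->
  measurable_fun setT s -> (forall x, 0 <= s x <= 1) ->
  0 < gamma -> 0 < alpha < 1 ->
  let Sel := fun w => ebh_sel alpha
        (fun j => Evalue (fun i => s (Xd i w)) (fun i => Yd i w) c gamma j 1) in
  (\int[P]_w (fdp (fun j => Lrisk c (Yd (rshift n j) w)) (Sel w))%:E
     <= alpha%:E)%E
  /\
  (gamma = alpha -> forall w,
     Sel w = bh_sel alpha (pconf s c (fun i => Xd i w) (fun i => Yd i w))).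
Proof.
move=> mXd mYd exch ms _ _ /andP[alpha_gt0 _] Sel; split.
  exact: expectation_fdp_ebh_le.
by rewrite /Sel => -> w; exact: ebh_sel_eq_bh_sel.
Qed.
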